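(* Let $p \geq q$ and $n\ge 1$ be positive integers and let $B$ be a $p\times q$ matrix with nonnegative real entries. Let $C$ be the $(nq+p)\times(nq+p)$ block matrix whose first block row is $[\,0_p\ B\ B\ \cdots\ B\,]$ ($n$ copies of $B$), whose first block column is $[\,0_p\ B^T\ \cdots\ B^T\,]^T$ ($n$ copies of $B^T$), and whose remaining blocks are all zero; and let $D$ be the $(np+q)\times(np+q)$ block matrix whose first block row is $[\,0_q\ B^T\ B^T\ \cdots\ B^T\,]$ ($n$ copies of $B^T$), whose first block column is $[\,0_q\ B\ \cdots\ B\,]^T$ ($n$ copies of $B$), and whose remaining blocks are all zero. Then the normalized Laplacians $L(C\oplus 0_{(n-1)(p-q)})$ and $L(D)$ are cospectral.
   Context: For matrices $X,Y$, $X\oplus Y=\begin{bmatrix} X&0\\0&Y\end{bmatrix}$; $0_m$ is the $m\times m$ zero matrix. For a nonnegative real symmetric matrix $M$ with positive row sums, its normalized Laplacian is $L(M)=I-\Delta^{-1/2}M\Delta^{-1/2}$, where $\Delta$ is the diagonal matrix of row sums of $M$. If $M$ has zero row sums, write (after a simultaneous permutation of rows and columns) $M=M_1\oplus 0_k$ where $M_1$ has positive row sums; then $L(M)=L(M_1)\oplus I_k$ (equivalently, $L(M)=I-(\Delta^{\dagger})^{1/2}M(\Delta^{\dagger})^{1/2}$ with $\Delta^\dagger$ the Moore–Penrose inverse of $\Delta$). Two square matrices are cospectral if they have the same eigenvalues with the same multiplicities. *)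

From HB Require Import structures.
From mathcomp Require Import all_boot all_order all_algebra.
From mathcomp Require Import reals.
Set Implicit Arguments. Unset Strict Implicit. Unset Printing Implicit Defensive.
Import Order.TTheory GRing.Theory Num.Theory.
Local Open Scope ring_scope.

Definition dsum (R : realType) (m k : nat) (X : 'M[R]_m) (Y : 'M[R]_k)
  : 'M[R]_(m + k) := block_mx X 0 0 Y.

Definition rowsum (R : realType) (m : nat) (M : 'M[R]_m) (i : 'I_m) : R :=
  \sum_(j < m) M i j.

(* Normalized Laplacian L(M) = I - (Delta^+)^{1/2} M (Delta^+)^{1/2},
   where Delta^+ is the Moore-Penrose inverse of the diagonal row-sum matrix:
   its (i,i) entry is 1/d_i if d_i > 0 and 0 if d_i = 0.  In mathcomp,
   x^-1 = x for non-units, in particular 0^-1 = 0, so (sqrt d)^-1 is exactly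
   the square root of the Moore-Penrose entry. *)
Definition normLap (R : realType) (m : nat) (M : 'M[R]_m) : 'M[R]_m :=
  1%:M - \matrix_(i, j) ((Num.sqrt (rowsum M i))^-1 * M i j
                          * (Num.sqrt (rowsum M j))^-1).

(* Cospectral: same eigenvalues with the same (algebraic) multiplicities,
   i.e. equal characteristic polynomials. *)
Definition cospectral (R : realType) (m k : nat) (A : 'M[R]_m) (B : 'M[R]_k)
  : Prop := char_poly A = char_poly B.

(* [B B ... B] (n copies), a p x nq matrix: row i is the row-major
   vectorisation of the n x q matrix all of whose rows equal row i of B. *)
Definition repRow (R : realType) (p q n : nat) (B : 'M[R]_(p, q))
  : 'M[R]_(p, n * q) :=
  \matrix_(i < p) mxvec (\matrix_(k < n, j < q) B i j).

Definition Cmat (R : realType) (p q n : nat) (B : 'M[R]_(p, q))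
  : 'M[R]_(p + n * q) :=
  block_mx (0 : 'M_p) (repRow n B) (repRow n B)^T (0 : 'M_(n * q)).

Definition Dmat (R : realType) (p q n : nat) (B : 'M[R]_(p, q))
  : 'M[R]_(q + n * p) :=
  block_mx (0 : 'M_q) (repRow n B^T) (repRow n B^T)^T (0 : 'M_(n * p)).

From HB Require Import structures.
From mathcomp Require Import all_boot all_order all_algebra.
From mathcomp Require Import reals ring zify.
Import Order.TTheory GRing.Theory Num.Theory.
Local Open Scope ring_scope.

(* Let N = D_r^-1/2 B D_c^-1/2 be the normalized biadjacency matrix of B.
   The normalized adjacency matrix of C is [0 X; X^T 0] with
   X = n^-1/2 [N ... N], so that X X^T = N N^T, and that of D is the same
   construction applied to N^T.  For t = x - 1 <> 0 a Schur complement gives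
     det(x I - L(C (+) 0)) = t^(nq + (n-1)(p-q)) det(t I - t^-1 N N^T),
     det(x I - L(D))       = t^(np)              det(t I - t^-1 N^T N),
   and Sylvester's identity t^q det(t I - t^-1 N N^T) = t^p det(t I - t^-1 N^T N)
   makes the right-hand sides equal when q <= p.  The characteristic
   polynomials therefore agree off x = 1, hence everywhere. *)

Lemma poly_eq_except (R : numDomainType) (a : R) (P Q : {poly R}) :
  (forall x, x != a -> P.[x] = Q.[x]) -> P = Q.
Proof.
move=> eqPQ; apply/eqP; rewrite -subr_eq0; apply/negPn/negP => nzPQ.
pose xs := [seq a + i.+1%:R | i <- iota 0 (size (P - Q))].
have xs_roots : all (root (P - Q)) xs.
  apply/allP => _ /mapP [i _ ->]; rewrite /root hornerD hornerN eqPQ ?subrr //.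
  by rewrite -subr_eq0 addrC addKr pnatr_eq0.
have xs_uniq : uniq xs.
  by rewrite map_inj_uniq ?iota_uniq // => i j /addrI /eqP; rewrite eqr_nat => /eqP [].
by have := max_poly_roots nzPQ xs_roots xs_uniq; rewrite size_map size_iota ltnn.
Qed.

Lemma horner_char_poly (R : comNzRingType) m (A : 'M[R]_m) x :
  (char_poly A).[x] = \det (x%:M - A).
Proof.
rewrite -horner_evalE -det_map_mx; congr (\det _); apply/matrixP => i j.
by rewrite !mxE rmorphB rmorphMn /= !horner_evalE hornerX hornerC.
Qed.

Section ScalarBlockDet.
Variables (F : fieldType) (p m : nat) (t : F) (X : 'M[F]_(p, m)) (Y : 'M[F]_(m, p)).
Hypothesis t_neq0 : t != 0.

Lemma det_scalar_block_l :
  \det (block_mx t%:M X Y t%:M) = t ^+ m * \det (t%:M - t^-1 *: (X *m Y)).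
Proof.
have -> : block_mx t%:M X Y t%:M = block_mx 1%:M (t^-1 *: X) 0 1%:M
   *m block_mx (t%:M - t^-1 *: (X *m Y)) 0 Y t%:M.
  rewrite mulmx_block ?mul1mx ?mul0mx ?mulmx0 ?add0r ?addr0 -scalemxAl subrK.
  by rewrite mul_mx_scalar scalerA mulfV // scale1r.
by rewrite det_mulmx det_ublock det_lblock !det1 !mul1r det_scalar mulrC.
Qed.

Lemma det_scalar_block_r :
  \det (block_mx t%:M X Y t%:M) = t ^+ p * \det (t%:M - t^-1 *: (Y *m X)).
Proof.
have -> : block_mx t%:M X Y t%:M = block_mx 1%:M 0 (t^-1 *: Y) 1%:M
   *m block_mx t%:M X 0 (t%:M - t^-1 *: (Y *m X)).
  rewrite mulmx_block ?mul1mx ?mul0mx ?mulmx0 ?add0r ?addr0; congr block_mx.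
    by rewrite mul_mx_scalar scalerA mulfV // scale1r.
  by rewrite -scalemxAl addrC subrK.
by rewrite det_mulmx det_ublock det_lblock !det1 ?mul1r ?mulr1 det_scalar.
Qed.

Lemma sylvester_det_scaled :
  t ^+ m * \det (t%:M - t^-1 *: (X *m Y)) = t ^+ p * \det (t%:M - t^-1 *: (Y *m X)).
Proof. by rewrite -det_scalar_block_l det_scalar_block_r. Qed.

End ScalarBlockDet.

Lemma sum_mxvec_index (V : nmodType) m n (F : 'I_(m * n) -> V) :
  \sum_k F k = \sum_(i < m) \sum_(j < n) F (mxvec_index i j).
Proof.
rewrite (reindex _ (curry_mxvec_bij _ _)) /= pair_bigA.
by apply: eq_bigr => -[].
Qed.

Section NormalizedLaplacian.
Set Implicit Arguments.
Context {R : realType}.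

Definition normAdj m (M : 'M[R]_m) : 'M[R]_m :=
  \matrix_(i, j) ((Num.sqrt (rowsum M i))^-1 * M i j * (Num.sqrt (rowsum M j))^-1).

Lemma scalar_sub_normLap m (M : 'M[R]_m) x :
  x%:M - normLap M = (x - 1)%:M + normAdj M.
Proof. by rewrite /normLap -/(normAdj M) opprB addrA addrAC raddfB. Qed.

Lemma normAdj_dsum0 m k (M : 'M[R]_m) :
  normAdj (dsum M (0 : 'M_k)) = block_mx (normAdj M) 0 0 0.
Proof.
have rowsum_l i : rowsum (dsum M (0 : 'M_k)) (lshift k i) = rowsum M i.
  rewrite /rowsum big_split_ord /= [X in _ + X]big1 ?addr0 => [|j _].
    by apply: eq_bigr => j _; rewrite block_mxEul.
  by rewrite block_mxEur mxE.
apply/matrixP => i j; rewrite -[i]splitK -[j]splitK mxE.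
case: (split i) => i'; case: (split j) => j'; rewrite /dsum.
- by rewrite !rowsum_l !block_mxEul mxE.
- by rewrite !block_mxEur !mxE mulr0 mul0r.
- by rewrite !block_mxEdl !mxE mulr0 mul0r.
- by rewrite !block_mxEdr !mxE mulr0 mul0r.
Qed.

Definition normBiadj p q (B : 'M[R]_(p, q)) : 'M[R]_(p, q) :=
  \matrix_(i, j) ((Num.sqrt (\sum_k B i k))^-1 * B i j * (Num.sqrt (\sum_k B k j))^-1).

Lemma normBiadj_tr p q (B : 'M[R]_(p, q)) : normBiadj B^T = (normBiadj B)^T.
Proof.
apply/matrixP => i j; rewrite !mxE.
rewrite (eq_bigr (fun k => B k i)) => [|k _]; last by rewrite mxE.
rewrite (eq_bigr (fun k => B j k)) => [|k _]; last by rewrite mxE.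
by rewrite mulrC mulrA mulrAC.
Qed.

Lemma repRowE p q n (B : 'M[R]_(p, q)) i a j :
  repRow n B i (mxvec_index a j) = B i j.
Proof. by rewrite mxE mxvecE mxE. Qed.

Lemma sum_repRow p q n (B : 'M[R]_(p, q)) i :
  \sum_k repRow n B i k = n%:R * \sum_j B i j.
Proof.
rewrite sum_mxvec_index (eq_bigr (fun=> \sum_j B i j)) => [|a _].
  by rewrite sumr_const card_ord mulr_natl.
by apply: eq_bigr => j _; rewrite repRowE.
Qed.

Lemma repRow_mulmx_tr p q n (N : 'M[R]_(p, q)) :
  repRow n N *m (repRow n N)^T = n%:R *: (N *m N^T).
Proof.
apply/matrixP => i i'; rewrite !mxE sum_mxvec_index.
rewrite (eq_bigr (fun=> \sum_j N i j * N i' j)) => [|a _].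
  by rewrite sumr_const card_ord mulr_natl; congr (_ *+ _); apply: eq_bigr => j _; rewrite mxE.
by apply: eq_bigr => j _; rewrite repRowE mxE repRowE.
Qed.

Lemma normAdj_Cmat p q n (B : 'M[R]_(p, q)) :
  let X := (Num.sqrt n%:R)^-1 *: repRow n (normBiadj B) in
  normAdj (Cmat n B) = block_mx 0 X X^T 0.
Proof.
have rowsum_l i : rowsum (Cmat n B) (lshift _ i) = n%:R * \sum_j B i j.
  rewrite /rowsum big_split_ord /= big1 => [|j _]; last by rewrite block_mxEul mxE.
  by rewrite add0r -sum_repRow; apply: eq_bigr => k _; rewrite block_mxEur.
have rowsum_r a j : rowsum (Cmat n B) (rshift p (mxvec_index a j)) = \sum_i B i j.
  rewrite /rowsum big_split_ord /= [X in _ + X]big1 => [|k _]; last by rewrite block_mxEdr mxE.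
  by rewrite addr0; apply: eq_bigr => k _; rewrite block_mxEdl mxE repRowE.
apply/matrixP => i k; rewrite -[i]splitK -[k]splitK mxE.
case: (split i) => i'; case: (split k) => k' /=.
- by rewrite {2}/Cmat !block_mxEul !mxE mulr0 mul0r.
- case/mxvec_indexP: k' => a j.
  rewrite rowsum_l rowsum_r {1}/Cmat !block_mxEur repRowE mxE repRowE mxE.
  by rewrite sqrtrM ?ler0n // invfM !mulrA.
- case/mxvec_indexP: i' => a j.
  rewrite rowsum_l rowsum_r {1}/Cmat !block_mxEdl [X in _ * X / _]mxE repRowE.
  by rewrite [RHS]mxE [RHS]mxE repRowE mxE sqrtrM ?ler0n // invfM; ring.
- by rewrite {2}/Cmat !block_mxEdr !mxE mulr0 mul0r.
Qed.

Lemma det_shift_normAdj_Cmat p q n (B : 'M[R]_(p, q)) (t : R) :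
  (0 < n)%N -> t != 0 ->
  \det (t%:M + normAdj (Cmat n B))
    = t ^+ (n * q) * \det (t%:M - t^-1 *: (normBiadj B *m (normBiadj B)^T)).
Proof.
move=> n_gt0 t_neq0; rewrite normAdj_Cmat (scalar_mx_block p (n * q)).
rewrite add_block_mx !addr0 !add0r det_scalar_block_l //; congr (_ * \det (_ - _ *: _)).
rewrite linearZ /= -scalemxAl -scalemxAr scalerA repRow_mulmx_tr scalerA.
rewrite -invfM -expr2 sqr_sqrtr ?ler0n // mulVf ?scale1r // pnatr_eq0 -lt0n //.
Qed.

End NormalizedLaplacian.

Theorem theorem3p3 (R : realType) (p q n : nat)
  (hq : (0 < q)%N) (hqp : (q <= p)%N) (hn : (1 <= n)%N)
  (B : 'M[R]_(p, q)) (hB : forall i j, 0 <= B i j) :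
  cospectral (normLap (dsum (Cmat n B) (0 : 'M[R]_((n - 1) * (p - q)))))
             (normLap (Dmat n B)).
Proof.
rewrite /cospectral; apply: (@poly_eq_except R 1) => x x_neq1.
rewrite !horner_char_poly !scalar_sub_normLap normAdj_dsum0.
set t := x - 1; have t_neq0 : t != 0 by rewrite subr_eq0.
rewrite (scalar_mx_block (p + n * q)) add_block_mx !addr0 det_ublock det_scalar.
rewrite det_shift_normAdj_Cmat // [Dmat n B]/(Cmat n B^T) det_shift_normAdj_Cmat //.
rewrite normBiadj_tr trmxK; set N := normBiadj B.
apply: (mulfI (expf_neq0 q t_neq0)).
transitivity (t ^+ (n * q + (n - 1) * (p - q)) * (t ^+ q * \det (t%:M - t^-1 *: (N *m N^T)))).
  by rewrite exprD; ring.
rewrite sylvester_det_scaled // !mulrA -!exprD; congr (t ^+ _ * _).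
case: n hn => // n' _; rewrite subSS subn0 -(subnKC hqp); nia.
Qed.
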